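(* Let $\mu<\lambda$ with $\nu=\sqrt{\lambda^2-\mu^2}\in(0,1)$, and let $\alpha\in\mathbb R$, $\vartheta\in(0,\pi)$. Then $PCT\,f_{(\alpha,\vartheta)\,\nu,\mathbf p}$ is a constant multiple of $f_{(\alpha,\vartheta)\,\nu,\mathbf p}$ (for all $\mathbf p$) only if $\vartheta=\pi\nu$; and for every $\alpha\in\mathbb R$, $$PCT\,f_{(\alpha,\pi\nu)\,\nu,\mathbf p}=-i\,f_{(\alpha,\pi\nu)\,\nu,\mathbf p}.$$
   Context: Fix $\omega>0$; work in the conformal chart $(t,\mathbf x)$, $t<0$, $\mathbf x\in\mathbb R^3$, of de Sitter spacetime. Let $\mu=m/\omega$ ($m$ the mass), $\lambda>0$ the coupling constant, $\mu<\lambda$, $\nu=\sqrt{\lambda^2-\mu^2}$. $J_a$ is the Bessel function of the first kind. Square-root convention: for $x>0$, $\sqrt x>0$ and $\sqrt{-x}=-i\sqrt x$; $\sqrt{ab}$ is read as $\sqrt a\sqrt b$. For $\alpha\in\mathbb R$, real $\vartheta$ with $\sin\vartheta\ne0$, define $$f_{(\alpha,\vartheta)\,\nu,\mathbf p}(t,\mathbf x)=\sqrt{\frac{\pi}{\omega}}\frac{i}{2\sqrt{\sin\pi\nu}\sqrt{\sin\vartheta}}\frac{(-\omega t)^{3/2}}{(2\pi)^{3/2}}\Big[e^{-\frac12 i\vartheta-\alpha}J_\nu(-pt)-e^{\frac12 i\vartheta+\alpha}J_{-\nu}(-pt)\Big]e^{i\mathbf x\cdot\mathbf p},\quad p=|\mathbf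 p|.$$ Operators: $(Pf)(t,\mathbf x)=f(t,-\mathbf x)$; $Cf=f^*$ (antilinear); $T$ replaces $t$ by $-t$ in this formula, where the multivalued factors are continued as $(-\omega(-t))^{3/2}=e^{\frac32 i\pi}(-\omega t)^{3/2}$ and $J_a(-s)=e^{i\pi a}J_a(s)$ for $s>0$ and any index $a$; $PCT=P\circ C\circ T$. *)

From Stdlib Require Import Arith Reals Lra ClassicalEpsilon.
Open Scope R_scope.

Definition Cplx : Type := (R * R)%type.
Definition RtoC (r : R) : Cplx := (r, 0).
Definition Ci : Cplx := (0, 1).
Definition Cadd (z w : Cplx) : Cplx := (fst z + fst w, snd z + snd w).
Definition Copp (z : Cplx) : Cplx := (- fst z, - snd z).
Definition Csub (z w : Cplx) : Cplx := Cadd z (Copp w).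
Definition Cmul (z w : Cplx) : Cplx :=
  (fst z * fst w - snd z * snd w, fst z * snd w + snd z * fst w).
Definition Cinv (z : Cplx) : Cplx :=
  let d := fst z * fst z + snd z * snd z in (fst z / d, - snd z / d).
Definition Cconj (z : Cplx) : Cplx := (fst z, - snd z).
Definition Cexp (z : Cplx) : Cplx := (exp (fst z) * cos (snd z), exp (fst z) * sin (snd z)).

(* square root of a real number with the paper's convention:
   sqrt x > 0 for x > 0, sqrt(-x) = -i sqrt x for x > 0 *)
Definition csqrtR (x : R) : Cplx :=
  if Rle_dec 0 x then RtoC (sqrt x) else (0, - sqrt (- x)).

Definition R3 : Type := (R * R * R)%type.
Definition dot3 (x y : R3) : R :=
  let '(x1, x2, x3) := x in let '(y1, y2, y3) := y in x1 * y1 + x2 * y2 + x3 * y3.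
Definition norm3 (x : R3) : R := sqrt (dot3 x x).
Definition neg3 (x : R3) : R3 := let '(x1, x2, x3) := x in (- x1, - x2, - x3).
Definition zero3 : R3 := (0, 0, 0).

(* ---------- reciprocal Gamma function (entire), via Gauss's limit ----------
   1/Gamma(z) = lim_{n -> oo} z (z+1) ... (z+n) / (n! n^z)                  *)
Fixpoint rising (z : R) (n : nat) : R :=
  match n with O => z | S k => rising z k * (z + INR (S k)) end.
Definition rgamma_seq (z : R) (n : nat) : R :=
  rising z n / (INR (fact n) * Rpower (INR n) z).
Definition rgamma (z : R) : R := epsilon (inhabits 0) (fun l => Un_cv (rgamma_seq z) l).

Definition besselJ_term (a s : R) (k : nat) : R :=
  (-1) ^ k / INR (fact k) * rgamma (INR k + a + 1) * Rpower (s / 2) (2 * INR k + a).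
Definition besselJ (a s : R) : R :=
  epsilon (inhabits 0) (fun l => infinite_sum (besselJ_term a s) l).

Definition nu_of (omega m lambda : R) : R := sqrt (lambda ^ 2 - (m / omega) ^ 2).

(* Generic shape of the formula for f, parametrised by the factor standing in
   the place of (-omega t)^(3/2) and by the functions standing in the place of
   J_a(-p t). *)
Definition f_gen (omega nu alpha theta : R) (A : R -> Cplx) (Jf : R -> R -> Cplx)
    (p : R3) (t : R) (x : R3) : Cplx :=
  Cmul (Cmul (Cmul (Cmul
    (RtoC (sqrt (PI / omega)))
    (Cmul Ci (Cinv (Cmul (RtoC 2) (Cmul (csqrtR (sin (PI * nu))) (csqrtR (sin theta)))))))
    (Cmul (A t) (RtoC (/ Rpower (2 * PI) (3 / 2)))))
    (Csub (Cmul (Cexp (- alpha, - theta / 2)) (Jf nu t))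
          (Cmul (Cexp (alpha, theta / 2)) (Jf (- nu) t))))
    (Cexp (0, dot3 x p)).

Definition fmode (omega nu alpha theta : R) (p : R3) : R -> R3 -> Cplx :=
  f_gen omega nu alpha theta
    (fun t => RtoC (Rpower (- omega * t) (3 / 2)))
    (fun a t => RtoC (besselJ a (- norm3 p * t))) p.

(* T f: t replaced by -t in the formula, with
   (-omega(-t))^(3/2) = e^{3 i pi/2} (-omega t)^(3/2)   and
   J_a(-p(-t)) = J_a(-(-p t)) = e^{i pi a} J_a(-p t). *)
Definition T_fmode (omega nu alpha theta : R) (p : R3) : R -> R3 -> Cplx :=
  f_gen omega nu alpha theta
    (fun t => Cmul (Cexp (0, 3 * PI / 2)) (RtoC (Rpower (- omega * t) (3 / 2))))
    (fun a t => Cmul (Cexp (0, PI * a)) (RtoC (besselJ a (- norm3 p * t)))) p.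

Definition Pop (F : R -> R3 -> Cplx) : R -> R3 -> Cplx := fun t x => F t (neg3 x).
Definition Cop (F : R -> R3 -> Cplx) : R -> R3 -> Cplx := fun t x => Cconj (F t x).

Definition PCT_fmode (omega nu alpha theta : R) (p : R3) : R -> R3 -> Cplx :=
  Pop (Cop (T_fmode omega nu alpha theta p)).

(* Analytic half: J_nu and J_-nu are linearly independent on (0, oo) for
   0 < nu < 1.  We first establish Gauss's formula for the reciprocal Gamma
   function at z > 0 (convergence of the Gauss sequence to a positive limit,
   via a telescoping bound on its logarithmic increments) and its functional
   equation.  These bound the Bessel series by a geometric series, giving
   J_a(s) = (1/Gamma(a+1)) (s/2)^a (1 + O(s^2)) with an explicit error; at two
   small arguments with ratio e^(2/nu) the determinant of (J_nu, J_-nu) is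
   then dominated by its diagonal, hence nonzero.

   Algebraic half: conjugating the time-reversed formula shows that PCT f is
   -i times the same formula with the Bessel phases -theta/2, theta/2 moved to
   theta/2 - pi nu, pi nu - theta/2.  For theta = pi nu these coincide, which
   is the second assertion.  Conversely, proportionality at x = 0 and the
   independence of J_nu, J_-nu make both phase factors proportional with the
   same constant, which forces sin(theta - pi nu) = 0, i.e. theta = pi nu. *)

From Stdlib Require Import Reals Lra Lia ClassicalEpsilon.
From Coquelicot Require Import Rcomplements Rbar Lim_seq Hierarchy Series.
Open Scope R_scope.

Lemma ln1p_bounds y : 0 <= y -> y - y * y <= ln (1 + y) <= y.
Proof.
  intros Hy. split.
  - assert (Hinv : 0 < / (1 + y)) by (apply Rinv_0_lt_compat; lra).
    pose proof (exp_ineq1_le (ln (/ (1 + y)))) as Hexp.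
    rewrite exp_ln, ln_Rinv in Hexp by lra.
    assert (E : / (1 + y) = 1 - y / (1 + y)) by (field; lra).
    assert (y - y * y <= y / (1 + y)).
    { apply (Rmult_le_reg_r (1 + y)); [lra|].
      unfold Rdiv. rewrite Rmult_assoc, Rinv_l by lra. nra. }
    lra.
  - destruct (Rle_or_lt (ln (1 + y)) y) as [Hle|Hgt]; [exact Hle|].
    apply exp_increasing in Hgt. rewrite exp_ln in Hgt by lra.
    pose proof (exp_ineq1_le y). lra.
Qed.

Lemma inv_Sn_lim : is_lim_seq (fun n => / INR (S n)) 0.
Proof.
  apply (is_lim_seq_incr_1 (fun n => / INR n)).
  replace (Finite 0) with (Rbar_inv p_infty) by reflexivity.
  apply is_lim_seq_inv; [apply is_lim_seq_INR | discriminate].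
Qed.

(* A real sequence whose increments are dominated by those of the telescoping
   sequence C / m converges: u + C/m decreases while u - C/m increases. *)
Lemma cvg_of_telescoping_increments (u : nat -> R) (C : R) :
  0 <= C ->
  (forall m, (1 <= m)%nat -> Rabs (u (S m) - u m) <= C * (/ INR m - / INR (S m))) ->
  exists l : R, is_lim_seq u l.
Proof.
  intros HC Hinc.
  set (a := fun m => u (S m) + C * / INR (S m)).
  set (b := fun m => u (S m) - C * / INR (S m)).
  assert (Hmono : forall m, a (S m) <= a m /\ b m <= b (S m)).
  { intro m. unfold a, b. pose proof (Hinc (S m) ltac:(lia)) as D.
    apply Rabs_le_between in D. lra. }
  assert (Hlow : forall m, b O <= a m).
  { intro m.
    assert (b O <= b m) by (induction m; [lra | pose proof (proj2 (Hmono m)); lra]).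
    assert (0 <= C * / INR (S m)).
    { apply Rmult_le_pos; [lra | left; apply Rinv_0_lt_compat, lt_0_INR; lia]. }
    unfold a, b in *. lra. }
  destruct (ex_finite_lim_seq_decr a (b O) (fun m => proj1 (Hmono m)) Hlow) as [la Hla].
  exists (la - C * 0). apply is_lim_seq_incr_1.
  eapply is_lim_seq_ext;
    [| apply is_lim_seq_minus';
       [exact Hla | apply is_lim_seq_mult'; [apply is_lim_seq_const | apply inv_Sn_lim]]].
  intro m. unfold a. simpl. ring.
Qed.

Lemma rising_pos z n : 0 < z -> 0 < rising z n.
Proof.
  intros Hz. induction n as [|n IH]; [simpl; lra|].
  change (rising z (S n)) with (rising z n * (z + INR (S n))).
  apply Rmult_lt_0_compat; [lra|]. pose proof (pos_INR (S n)). lra.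
Qed.

Lemma rgamma_seq_pos z n : 0 < z -> 0 < rgamma_seq z n.
Proof.
  intros Hz. unfold rgamma_seq.
  apply Rdiv_lt_0_compat; [apply rising_pos; lra|].
  apply Rmult_lt_0_compat; [apply INR_fact_lt_0 | apply exp_pos].
Qed.

Lemma ln_rgamma_seq_succ z m : 0 < z -> (1 <= m)%nat ->
  ln (rgamma_seq z (S m)) - ln (rgamma_seq z m)
  = ln (1 + z / (INR m + 1)) - z * ln (1 + / INR m).
Proof.
  intros Hz Hm.
  assert (HN : 1 <= INR m) by (apply (le_INR 1); lia).
  assert (Hstep : rgamma_seq z (S m)
                  = rgamma_seq z m * (1 + z / (INR m + 1)) * exp (- (z * ln (1 + / INR m)))).
  { assert (Hln : ln (INR (S m)) = ln (INR m) + ln (1 + / INR m)).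
    { rewrite <- ln_mult by (try apply Rplus_lt_0_compat; try apply Rinv_0_lt_compat; lra).
      f_equal. rewrite S_INR. field. lra. }
    unfold rgamma_seq, Rpower.
    change (rising z (S m)) with (rising z m * (z + INR (S m))). rewrite fact_simpl, mult_INR, Hln.
    replace (z * (ln (INR m) + ln (1 + / INR m)))
      with (z * ln (INR m) + z * ln (1 + / INR m)) by ring.
    rewrite exp_plus, exp_Ropp, S_INR.
    pose proof (INR_fact_neq_0 m). pose proof (exp_pos (z * ln (INR m))).
    pose proof (exp_pos (z * ln (1 + / INR m))).
    field. repeat split; lra. }
  pose proof (rgamma_seq_pos z m Hz).
  assert (0 < 1 + z / (INR m + 1)) by (pose proof (Rdiv_lt_0_compat z (INR m + 1)); lra).
  rewrite Hstep, ln_mult, ln_mult, ln_exp; [lra | lra | lra | | apply exp_pos].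
  apply Rmult_lt_0_compat; lra.
Qed.

Lemma ln_gauss_factor_bound z N : 0 < z -> 1 <= N ->
  Rabs (ln (1 + z / (N + 1)) - z * ln (1 + / N)) <= (2 * z + z * z) * (/ N - / (N + 1)).
Proof.
  intros Hz HN.
  set (a := / N). set (b := / (N + 1)).
  assert (Ha0 : 0 < a) by (unfold a; apply Rinv_0_lt_compat; lra).
  assert (Hb0 : 0 < b) by (unfold b; apply Rinv_0_lt_compat; lra).
  assert (Hab : a - b = a * b) by (unfold a, b; field; lra).
  assert (Hba : b <= a) by (assert (N * a = 1) by (unfold a; field; lra); nra).
  assert (Ha2 : a <= 2 * b).
  { assert (N * a = 1) by (unfold a; field; lra).
    assert ((N + 1) * b = 1) by (unfold b; field; lra). nra. }
  replace (z / (N + 1)) with (z * b) by (unfold b; field; lra).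
  destruct (ln1p_bounds (z * b)) as [L1 U1]; [nra|].
  destruct (ln1p_bounds a) as [L2 U2]; [lra|].
  rewrite Hab. apply Rabs_le. split.
  - assert (z * b * (z * b) <= z * z * (a * b)) by (assert (0 <= z * z) by nra; nra).
    assert (z * ln (1 + a) <= z * a) by nra. nra.
  - assert (z * (a - a * a) <= z * ln (1 + a)) by nra.
    assert (z * (a * a) <= 2 * z * (a * b)) by (assert (0 <= z * a) by nra; nra).
    nra.
Qed.

Lemma rgamma_spec z : 0 < z -> 0 < rgamma z /\ is_lim_seq (rgamma_seq z) (rgamma z).
Proof.
  intros Hz.
  assert (Hinc : forall m, (1 <= m)%nat ->
    Rabs (ln (rgamma_seq z (S m)) - ln (rgamma_seq z m))
    <= (2 * z + z * z) * (/ INR m - / INR (S m))).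
  { intros m Hm. rewrite ln_rgamma_seq_succ, S_INR by assumption.
    apply ln_gauss_factor_bound; [exact Hz | apply (le_INR 1); lia]. }
  destruct (cvg_of_telescoping_increments _ (2 * z + z * z) ltac:(nra) Hinc) as [l Hl].
  assert (Hlim : is_lim_seq (rgamma_seq z) (exp l)).
  { eapply is_lim_seq_ext; [| apply (is_lim_seq_continuous exp); [| exact Hl]].
    - intro m. apply exp_ln, rgamma_seq_pos, Hz.
    - apply derivable_continuous_pt, derivable_exp. }
  assert (E : rgamma z = exp l).
  { unfold rgamma. apply (UL_sequence (rgamma_seq z)); [| apply is_lim_seq_Reals, Hlim].
    apply epsilon_spec. exists (exp l). apply is_lim_seq_Reals, Hlim. }
  rewrite E. split; [apply exp_pos | exact Hlim].
Qed.

Lemma rising_shift z n : rising z (S n) = z * rising (z + 1) n.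
Proof.
  induction n as [|n IH]; [simpl; ring|].
  change (rising z (S (S n))) with (rising z (S n) * (z + INR (S (S n)))).
  change (rising (z + 1) (S n)) with (rising (z + 1) n * (z + 1 + INR (S n))).
  rewrite IH, (S_INR (S n)). ring.
Qed.

Lemma rgamma_seq_shift z m : 0 < z ->
  rgamma_seq (z + 1) (S m)
  = rgamma_seq z (S (S m)) * exp ((z + 1) * (ln (INR (S (S m))) - ln (INR (S m)))) / z.
Proof.
  intros Hz. unfold rgamma_seq, Rpower.
  rewrite (rising_shift z (S m)), (fact_simpl (S m)), mult_INR.
  assert (H1 : 0 < INR (S m)) by (apply lt_0_INR; lia).
  assert (H2 : 0 < INR (S (S m))) by (apply lt_0_INR; lia).
  pose proof (INR_fact_neq_0 (S m)).
  replace ((z + 1) * (ln (INR (S (S m))) - ln (INR (S m)))) with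
    ((z * ln (INR (S (S m))) + ln (INR (S (S m)))) + - ((z + 1) * ln (INR (S m)))) by ring.
  rewrite exp_plus, exp_plus, exp_Ropp, exp_ln by lra.
  pose proof (exp_pos (z * ln (INR (S (S m))))).
  pose proof (exp_pos ((z + 1) * ln (INR (S m)))).
  field. repeat split; lra.
Qed.

(* ln (m + 2) - ln (m + 1) = ln (1 + 1/(m+1)) lies in [0, 1/(m+1)]. *)
Lemma ln_succ_diff_lim : is_lim_seq (fun m => ln (INR (S (S m))) - ln (INR (S m))) 0.
Proof.
  apply (is_lim_seq_le_le (fun _ => 0) _ (fun m => / INR (S m)));
    [| apply is_lim_seq_const | apply inv_Sn_lim].
  intro m. assert (HN : 0 < INR (S m)) by (apply lt_0_INR; lia).
  assert (Hy : 0 < / INR (S m)) by (apply Rinv_0_lt_compat; lra).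
  replace (INR (S (S m))) with (INR (S m) * (1 + / INR (S m)))
    by (rewrite (S_INR (S m)); field; lra).
  rewrite ln_mult by lra.
  destruct (ln1p_bounds (/ INR (S m))) as [_ Hup]; [lra|].
  pose proof (ln_increasing 1 (1 + / INR (S m)) ltac:(lra) ltac:(lra)) as Hpos.
  rewrite ln_1 in Hpos. lra.
Qed.

Lemma rgamma_rec z : 0 < z -> rgamma (z + 1) = rgamma z / z.
Proof.
  intros Hz.
  destruct (rgamma_spec z Hz) as [_ Hlim].
  destruct (rgamma_spec (z + 1) ltac:(lra)) as [_ Hlim1].
  assert (Hfactor : is_lim_seq
            (fun m => exp ((z + 1) * (ln (INR (S (S m))) - ln (INR (S m))))) (exp ((z + 1) * 0))).
  { apply (is_lim_seq_continuous (fun y => exp ((z + 1) * y))); [| apply ln_succ_diff_lim].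
    apply derivable_continuous_pt, derivable_pt_comp;
      [apply derivable_pt_scal, derivable_pt_id | apply derivable_exp]. }
  rewrite Rmult_0_r, exp_0 in Hfactor.
  apply (proj1 (is_lim_seq_incr_1 _ _)), (proj1 (is_lim_seq_incr_1 _ _)) in Hlim.
  apply (proj1 (is_lim_seq_incr_1 _ _)) in Hlim1.
  assert (Hshift : is_lim_seq (fun m => rgamma_seq (z + 1) (S m)) (rgamma z * 1 / z)).
  { eapply is_lim_seq_ext; [intro m; symmetry; apply rgamma_seq_shift, Hz |].
    apply is_lim_seq_mult'; [apply is_lim_seq_mult'; assumption | apply is_lim_seq_const]. }
  apply is_lim_seq_unique in Hlim1, Hshift. rewrite Hlim1 in Hshift.
  injection Hshift as E. rewrite E. field. lra.
Qed.

(* Shifting the argument by a positive integer k does not increase 1/Gamma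
   beyond (1/Gamma(z)) / z, since 1/Gamma(w+1) = (1/Gamma(w)) / w <= 1/Gamma(w)
   once w >= 1. *)
Lemma rgamma_shift_le z k : 0 < z -> rgamma (z + INR (S k)) <= rgamma z / z.
Proof.
  intros Hz. induction k as [|k IH].
  - simpl. rewrite rgamma_rec by exact Hz. lra.
  - assert (Hw : 1 <= z + INR (S k)) by (rewrite S_INR; pose proof (pos_INR k); lra).
    destruct (rgamma_spec (z + INR (S k)) ltac:(lra)) as [Hpos _].
    replace (z + INR (S (S k))) with (z + INR (S k) + 1) by (rewrite (S_INR (S k)); ring).
    rewrite rgamma_rec by lra.
    apply Rle_trans with (rgamma (z + INR (S k))); [| exact IH].
    unfold Rdiv. rewrite <- (Rmult_1_r (rgamma (z + INR (S k)))) at 2.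
    apply Rmult_le_compat_l; [lra |].
    rewrite <- Rinv_1. apply Rinv_le_contravar; lra.
Qed.

Lemma besselJ_term_eq a s k : 0 < s ->
  besselJ_term a s k
  = (-1) ^ k / INR (Factorial.fact k) * rgamma (a + 1 + INR k) * Rpower (s / 2) a
    * (s / 2 * (s / 2)) ^ k.
Proof.
  intros Hs. unfold besselJ_term.
  rewrite Rpower_plus.
  replace (2 * INR k) with (INR (2 * k)) by (rewrite mult_INR; simpl; ring).
  rewrite Rpower_pow, pow_mult by lra.
  replace (INR k + a + 1) with (a + 1 + INR k) by ring.
  replace ((s / 2) ^ 2) with (s / 2 * (s / 2)) by ring. ring.
Qed.

Lemma besselJ_term_succ_bound a s k : 0 < a + 1 -> 0 < s ->
  Rabs (besselJ_term a s (S k))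
  <= rgamma (a + 1) / (a + 1) * Rpower (s / 2) a * (s / 2 * (s / 2)) ^ S k.
Proof.
  intros Ha Hs. rewrite besselJ_term_eq by exact Hs.
  set (X := s / 2 * (s / 2)). set (P := Rpower (s / 2) a).
  assert (HP : 0 < P) by (unfold P, Rpower; apply exp_pos).
  assert (HX : 0 <= X ^ S k) by (apply pow_le; unfold X; nra).
  pose proof (rgamma_shift_le (a + 1) k Ha) as Hshift.
  destruct (rgamma_spec (a + 1 + INR (S k))) as [Hpos _];
    [pose proof (pos_INR (S k)); lra |].
  assert (Hfact : 0 < / INR (Factorial.fact (S k)) <= 1).
  { split; [apply Rinv_0_lt_compat, INR_fact_lt_0 |].
    rewrite <- Rinv_1. apply Rinv_le_contravar; [lra |].
    apply (le_INR 1). pose proof (Factorial.fact_neq_0 (S k)). lia. }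
  rewrite !Rabs_mult. unfold Rdiv. rewrite Rabs_mult, pow_1_abs, Rmult_1_l.
  rewrite Rabs_pos_eq, (Rabs_pos_eq (rgamma _)), (Rabs_pos_eq P), (Rabs_pos_eq (X ^ _))
    by lra.
  apply Rmult_le_compat_r; [lra |]. apply Rmult_le_compat_r; [lra |].
  unfold Rdiv in Hshift. rewrite <- (Rmult_1_l (rgamma (a + 1) * / (a + 1))).
  apply Rmult_le_compat; lra.
Qed.

Lemma besselJ_series a s : 0 < a + 1 -> 0 < s -> s / 2 * (s / 2) < 1 ->
  ex_series (fun k => Rabs (besselJ_term a s k))
  /\ besselJ a s = Series (besselJ_term a s).
Proof.
  intros Ha Hs HX.
  set (X := s / 2 * (s / 2)) in *.
  assert (HXabs : Rabs X < 1) by (rewrite Rabs_pos_eq by (unfold X; nra); lra).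
  assert (Habs : ex_series (fun k => Rabs (besselJ_term a s k))).
  { apply (ex_series_incr_1 (fun k => Rabs (besselJ_term a s k))).
    apply (@ex_series_le R_AbsRing R_CompleteNormedModule _
             (fun k => rgamma (a + 1) / (a + 1) * Rpower (s / 2) a * X ^ S k)).
    - intro n. change (norm (Rabs (besselJ_term a s (S n))))
        with (Rabs (Rabs (besselJ_term a s (S n)))).
      rewrite Rabs_Rabsolu. apply besselJ_term_succ_bound; assumption.
    - apply (ex_series_incr_1 (fun k => rgamma (a + 1) / (a + 1) * Rpower (s / 2) a * X ^ k)).
      apply (ex_series_scal_l (rgamma (a + 1) / (a + 1) * Rpower (s / 2) a) (fun k => X ^ k)).
      apply ex_series_geom, HXabs. }
  split; [exact Habs |].
  assert (Hsum : is_series (besselJ_term a s) (Series (besselJ_term a s)))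
    by (apply Series_correct, ex_series_Rabs, Habs).
  unfold besselJ. apply (uniqueness_sum (besselJ_term a s)); [| apply is_series_Reals, Hsum].
  apply epsilon_spec. exists (Series (besselJ_term a s)). apply is_series_Reals, Hsum.
Qed.

Lemma besselJ_small_arg a s : 0 < a + 1 -> 0 < s ->
  s / 2 * (s / 2) <= (a + 1) / 4 -> s / 2 * (s / 2) <= 1 / 4 ->
  Rabs (besselJ a s - rgamma (a + 1) * Rpower (s / 2) a)
  <= rgamma (a + 1) * Rpower (s / 2) a / 3.
Proof.
  intros Ha Hs HXa HX1.
  destruct (besselJ_series a s Ha Hs ltac:(lra)) as [Habs ->].
  set (z := a + 1) in *. set (X := s / 2 * (s / 2)) in *. set (P := Rpower (s / 2) a).
  assert (HP : 0 < P) by (unfold P, Rpower; apply exp_pos).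
  destruct (rgamma_spec z Ha) as [Hg _].
  assert (HX0 : 0 <= X) by (unfold X; nra).
  assert (HXabs : Rabs X < 1) by (rewrite Rabs_pos_eq; lra).
  rewrite Series_incr_1 by (apply ex_series_Rabs, Habs).
  assert (Hlead : besselJ_term a s 0 = rgamma z * P).
  { rewrite besselJ_term_eq by exact Hs. simpl. rewrite Rplus_0_r. fold z P. field. }
  rewrite Hlead.
  replace (rgamma z * P + Series (fun k => besselJ_term a s (S k)) - rgamma z * P)
    with (Series (fun k => besselJ_term a s (S k))) by ring.
  eapply Rle_trans.
  { apply Series_Rabs, (ex_series_incr_1 (fun k => Rabs (besselJ_term a s k))), Habs. }
  eapply Rle_trans.
  { apply (Series_le _ (fun k => rgamma z / z * P * X * X ^ k)).
    - intro n. split; [apply Rabs_pos |].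
      replace (rgamma z / z * P * X * X ^ n) with (rgamma z / z * P * X ^ S n) by (simpl; ring).
      apply besselJ_term_succ_bound; assumption.
    - apply (ex_series_scal_l (rgamma z / z * P * X) (fun k => X ^ k)).
      apply ex_series_geom, HXabs. }
  rewrite Series_scal_l, Series_geom by exact HXabs.
  assert (HXX : X * / (1 - X) <= z / 3).
  { apply (Rmult_le_reg_r (1 - X)); [lra |]. rewrite Rmult_assoc, Rinv_l by lra. nra. }
  assert (0 < rgamma z / z * P) by (apply Rmult_lt_0_compat; [apply Rdiv_lt_0_compat |]; lra).
  replace (rgamma z / z * P * X * / (1 - X)) with (rgamma z / z * P * (X * / (1 - X))) by ring.
  apply Rle_trans with (rgamma z / z * P * (z / 3)); [apply Rmult_le_compat_l; lra |].
  right. field. lra.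
Qed.

Lemma besselJ_small_arg_bounds a x : 0 < a + 1 -> 0 < x ->
  x * x <= (a + 1) / 4 -> x * x <= 1 / 4 ->
  0 < rgamma (a + 1) * Rpower x a
  /\ 2 / 3 * (rgamma (a + 1) * Rpower x a) <= besselJ a (2 * x)
  /\ besselJ a (2 * x) <= 4 / 3 * (rgamma (a + 1) * Rpower x a).
Proof.
  intros Ha Hx Hxa Hx1.
  pose proof (besselJ_small_arg a (2 * x) Ha) as HJ.
  replace (2 * x / 2) with x in HJ by field.
  specialize (HJ ltac:(lra) Hxa Hx1). apply Rabs_le_between in HJ.
  destruct (rgamma_spec (a + 1) Ha) as [Hg _].
  assert (0 < Rpower x a) by (unfold Rpower; apply exp_pos).
  split; [apply Rmult_lt_0_compat |]; lra.
Qed.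

Lemma leading_powers_product x nu : 0 < x -> nu <> 0 ->
  Rpower x nu * Rpower (x * exp (- (2 / nu))) (- nu) = exp 2
  /\ Rpower (x * exp (- (2 / nu))) nu * Rpower x (- nu) = exp (- 2).
Proof.
  intros Hx Hnu. unfold Rpower.
  rewrite ln_mult, ln_exp by (try apply exp_pos; lra).
  rewrite <- !exp_plus. split; f_equal; field; exact Hnu.
Qed.

(* For 0 < nu < 1 the Wronskian-like determinant of (J_nu, J_-nu) at two
   small arguments is positive: by the small-argument asymptotics its
   diagonal product is at least (4/9) e^2 and its antidiagonal one at most
   (16/9) e^(-2), in units of (1/Gamma(1+nu)) (1/Gamma(1-nu)). *)
Lemma besselJ_det_pos nu : 0 < nu < 1 ->
  exists s1 s2, 0 < s1 /\ 0 < s2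
    /\ 0 < besselJ nu s1 * besselJ (- nu) s2 - besselJ nu s2 * besselJ (- nu) s1.
Proof.
  intros Hn.
  set (x1 := sqrt ((1 - nu) / 4)). set (x2 := x1 * exp (- (2 / nu))).
  assert (Hx1 : 0 < x1) by (apply sqrt_lt_R0; lra).
  assert (Hx1sq : x1 * x1 = (1 - nu) / 4) by (apply sqrt_sqrt; lra).
  assert (Hq : 0 < exp (- (2 / nu)) < 1).
  { split; [apply exp_pos |]. rewrite <- exp_0. apply exp_increasing.
    assert (0 < 2 / nu) by (apply Rdiv_lt_0_compat; lra). lra. }
  assert (Hx2 : 0 < x2) by (unfold x2; nra).
  assert (Hx2sq : x2 * x2 <= (1 - nu) / 4).
  { unfold x2. rewrite <- Hx1sq.
    replace (x1 * exp (- (2 / nu)) * (x1 * exp (- (2 / nu))))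
      with (x1 * x1 * (exp (- (2 / nu)) * exp (- (2 / nu)))) by ring.
    assert (0 < x1 * x1) by nra. assert (exp (- (2 / nu)) * exp (- (2 / nu)) < 1) by nra.
    nra. }
  destruct (leading_powers_product x1 nu Hx1 ltac:(lra)) as [Pdiag Panti]. fold x2 in Pdiag, Panti.
  destruct (besselJ_small_arg_bounds nu x1 ltac:(lra) Hx1 ltac:(lra) ltac:(lra))
    as [L11 [B11 U11]].
  destruct (besselJ_small_arg_bounds nu x2 ltac:(lra) Hx2 ltac:(lra) ltac:(lra))
    as [L12 [B12 U12]].
  destruct (besselJ_small_arg_bounds (- nu) x1 ltac:(lra) Hx1 ltac:(lra) ltac:(lra))
    as [L21 [B21 U21]].
  destruct (besselJ_small_arg_bounds (- nu) x2 ltac:(lra) Hx2 ltac:(lra) ltac:(lra))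
    as [L22 [B22 U22]].
  exists (2 * x1), (2 * x2). split; [lra | split; [lra |]].
  set (R1 := rgamma (nu + 1)) in *. set (R2 := rgamma (- nu + 1)) in *.
  assert (HR : 0 < R1 * R2).
  { apply Rmult_lt_0_compat; [apply (rgamma_spec (nu + 1)) | apply (rgamma_spec (- nu + 1))]; lra. }
  assert (Hdiag : 4 / 9 * (R1 * R2 * exp 2)
                  <= besselJ nu (2 * x1) * besselJ (- nu) (2 * x2)).
  { rewrite <- Pdiag.
    apply Rle_trans with ((2 / 3 * (R1 * Rpower x1 nu)) * (2 / 3 * (R2 * Rpower x2 (- nu))));
      [right; field | apply Rmult_le_compat; lra]. }
  assert (Hanti : besselJ nu (2 * x2) * besselJ (- nu) (2 * x1)
                  <= 16 / 9 * (R1 * R2 * exp (- 2))).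
  { rewrite <- Panti.
    apply Rle_trans with ((4 / 3 * (R1 * Rpower x2 nu)) * (4 / 3 * (R2 * Rpower x1 (- nu))));
      [apply Rmult_le_compat; lra | right; field]. }
  assert (He : 4 * exp (- 2) < exp 2).
  { assert (Hinv : exp (- 2) * exp 2 = 1) by (rewrite <- exp_plus, <- exp_0; f_equal; ring).
    pose proof (exp_ineq1 2 ltac:(lra)). pose proof (exp_pos (- 2)). nra. }
  nra.
Qed.

Lemma besselJ_indep nu u v : 0 < nu < 1 ->
  (forall s, 0 < s -> u * besselJ nu s = v * besselJ (- nu) s) -> u = 0 /\ v = 0.
Proof.
  intros Hn Hrel.
  destruct (besselJ_det_pos nu Hn) as [s1 [s2 [Hs1 [Hs2 Hdet]]]].
  pose proof (Hrel s1 Hs1) as E1. pose proof (Hrel s2 Hs2) as E2.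
  set (D := besselJ nu s1 * besselJ (- nu) s2 - besselJ nu s2 * besselJ (- nu) s1) in *.
  assert (Hu : u * D = 0).
  { unfold D. replace (u * _) with (u * besselJ nu s1 * besselJ (- nu) s2
                                    - u * besselJ nu s2 * besselJ (- nu) s1) by ring.
    rewrite E1, E2. ring. }
  assert (Hv : v * D = 0).
  { unfold D. replace (v * _) with (v * besselJ (- nu) s2 * besselJ nu s1
                                    - v * besselJ (- nu) s1 * besselJ nu s2) by ring.
    rewrite <- E1, <- E2. ring. }
  apply Rmult_integral in Hu, Hv. lra.
Qed.

Lemma Cmul_assoc (z w y : Cplx) : Cmul (Cmul z w) y = Cmul z (Cmul w y).
Proof. destruct z, w, y. unfold Cmul; simpl. f_equal; ring. Qed.

Lemma Cmul_1_r (z : Cplx) : Cmul z (1, 0) = z.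
Proof. destruct z. unfold Cmul; simpl. f_equal; ring. Qed.

Lemma Cexp_mul (a b c d : R) : Cmul (Cexp (a, b)) (Cexp (c, d)) = Cexp (a + c, b + d).
Proof.
  unfold Cmul, Cexp; simpl. rewrite exp_plus, cos_plus, sin_plus. f_equal; ring.
Qed.

Lemma Cexp_0 : Cexp (0, 0) = (1, 0).
Proof. unfold Cexp; simpl. rewrite exp_0, cos_0, sin_0. f_equal; ring. Qed.

Lemma Cconj_Cexp_mul a b c : Cconj (Cmul (Cexp (a, b)) (Cexp (0, c))) = Cexp (a, - (b + c)).
Proof.
  unfold Cconj, Cmul, Cexp; simpl.
  rewrite exp_0, cos_neg, sin_neg, cos_plus, sin_plus. f_equal; ring.
Qed.

Lemma Cexp_neg_conj d : Cexp (0, - d) = Cconj (Cexp (0, d)).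
Proof. unfold Cexp, Cconj; simpl. rewrite cos_neg, sin_neg. f_equal; ring. Qed.

Lemma Cexp_3PI2 : Cexp (0, 3 * PI / 2) = (0, -1).
Proof.
  unfold Cexp; simpl. replace (3 * PI / 2) with (3 * (PI / 2)) by field.
  rewrite cos_3PI2, sin_3PI2, exp_0. f_equal; ring.
Qed.

Lemma Cexp_proportional (m c : Cplx) r a b :
  Cmul m (Cexp (r, a)) = Cmul c (Cexp (r, b)) -> c = Cmul m (Cexp (0, a - b)).
Proof.
  intros H.
  rewrite <- (Cmul_1_r c), <- Cexp_0.
  replace (0, 0) with (r + - r, b + - b) by (f_equal; ring).
  rewrite <- Cexp_mul, <- Cmul_assoc, <- H, Cmul_assoc, Cexp_mul.
  replace (r + - r, a + - b) with (0, a - b) by (f_equal; ring). reflexivity.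
Qed.

Lemma Cmul_imag_cancel (m c z w : Cplx) q : q <> 0 ->
  Cmul m (Cmul (0, q) z) = Cmul c (Cmul (0, q) w) -> Cmul m z = Cmul c w.
Proof.
  destruct m, c, z, w. unfold Cmul; simpl. intros Hq H. injection H as H1 H2.
  f_equal; apply (Rmult_eq_reg_l q); auto; lra.
Qed.

Lemma besselJ_comb_coeffs nu (m c a b a' b' : Cplx) : 0 < nu < 1 ->
  (forall s, 0 < s ->
     Cmul m (Csub (Cmul a (RtoC (besselJ nu s))) (Cmul b (RtoC (besselJ (- nu) s))))
     = Cmul c (Csub (Cmul a' (RtoC (besselJ nu s))) (Cmul b' (RtoC (besselJ (- nu) s))))) ->
  Cmul m a = Cmul c a' /\ Cmul m b = Cmul c b'.
Proof.
  intros Hn Hrel.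
  destruct m as [m1 m2], c as [c1 c2], a as [a1 a2], b as [b1 b2],
           a' as [a1' a2'], b' as [b1' b2'].
  set (u1 := m1 * a1 - m2 * a2 - (c1 * a1' - c2 * a2')).
  set (u2 := m1 * a2 + m2 * a1 - (c1 * a2' + c2 * a1')).
  set (v1 := m1 * b1 - m2 * b2 - (c1 * b1' - c2 * b2')).
  set (v2 := m1 * b2 + m2 * b1 - (c1 * b2' + c2 * b1')).
  assert (Hcomp : forall s, 0 < s ->
            u1 * besselJ nu s = v1 * besselJ (- nu) s
            /\ u2 * besselJ nu s = v2 * besselJ (- nu) s).
  { intros s Hs. specialize (Hrel s Hs).
    unfold Cmul, Csub, Cadd, Copp, RtoC in Hrel; simpl in Hrel.
    injection Hrel as H1 H2. unfold u1, u2, v1, v2. split; lra. }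
  destruct (besselJ_indep nu u1 v1 Hn (fun s Hs => proj1 (Hcomp s Hs))) as [U1 V1].
  destruct (besselJ_indep nu u2 v2 Hn (fun s Hs => proj2 (Hcomp s Hs))) as [U2 V2].
  unfold Cmul; simpl. unfold u1, u2, v1, v2 in *. split; f_equal; lra.
Qed.

(* With a purely imaginary prefactor
   (0, k), the factor e^(3 i pi/2) = -i, real factors a, g, j1, j2, and the
   plane wave conjugated by P, complex conjugation yields -i times the same
   formula with the phases of the Bessel terms conjugated. *)
Lemma conj_time_reversed_shape (k a g j1 j2 : R) (e1 w1 e2 w2 E : Cplx) :
  Cconj (Cmul (Cmul (Cmul (0, k) (Cmul (Cmul (0, -1) (RtoC a)) (RtoC g)))
                    (Csub (Cmul e1 (Cmul w1 (RtoC j1))) (Cmul e2 (Cmul w2 (RtoC j2)))))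
              (Cconj E))
  = Cmul (Copp Ci)
      (Cmul (Cmul (Cmul (0, k) (Cmul (RtoC a) (RtoC g)))
                  (Csub (Cmul (Cconj (Cmul e1 w1)) (RtoC j1))
                        (Cmul (Cconj (Cmul e2 w2)) (RtoC j2))))
            E).
Proof.
  destruct e1, w1, e2, w2, E.
  unfold Cconj, Cmul, Csub, Cadd, Copp, Ci, RtoC; simpl. f_equal; ring.
Qed.

Lemma dot3_neg x p : dot3 (neg3 x) p = - dot3 x p.
Proof. destruct x as [[x1 x2] x3], p as [[p1 p2] p3]; simpl; ring. Qed.

Lemma norm3_e1 : norm3 (1, 0, 0) = 1.
Proof. unfold norm3, dot3. replace (1 * 1 + 0 * 0 + 0 * 0) with 1 by ring. apply sqrt_1. Qed.

Definition mode_prefactor (omega nu theta : R) : Cplx :=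
  Cmul (RtoC (sqrt (PI / omega)))
       (Cmul Ci (Cinv (Cmul (RtoC 2) (Cmul (csqrtR (sin (PI * nu))) (csqrtR (sin theta)))))).

Lemma mode_prefactor_imag omega nu theta : 0 < sin (PI * nu) -> 0 < sin theta ->
  mode_prefactor omega nu theta
  = (0, sqrt (PI / omega) / (2 * sqrt (sin (PI * nu)) * sqrt (sin theta))).
Proof.
  intros Ha Hb. unfold mode_prefactor, csqrtR.
  destruct (Rle_dec 0 (sin (PI * nu))); [| lra]. destruct (Rle_dec 0 (sin theta)); [| lra].
  pose proof (sqrt_lt_R0 _ Ha). pose proof (sqrt_lt_R0 _ Hb).
  unfold Cinv, Cmul, RtoC, Ci; simpl. f_equal; field; lra.
Qed.

Definition bessel_comb (nu alpha phi1 phi2 s : R) : Cplx :=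
  Csub (Cmul (Cexp (- alpha, phi1)) (RtoC (besselJ nu s)))
       (Cmul (Cexp (alpha, phi2)) (RtoC (besselJ (- nu) s))).

Definition mode_phased (omega nu alpha theta phi1 phi2 : R) (p : R3) (t : R) (x : R3) : Cplx :=
  Cmul (Cmul (Cmul (mode_prefactor omega nu theta)
                   (Cmul (RtoC (Rpower (- omega * t) (3 / 2))) (RtoC (/ Rpower (2 * PI) (3 / 2)))))
             (bessel_comb nu alpha phi1 phi2 (- norm3 p * t)))
       (Cexp (0, dot3 x p)).

Lemma fmode_phased omega nu alpha theta p t x :
  fmode omega nu alpha theta p t x = mode_phased omega nu alpha theta (- theta / 2) (theta / 2) p t x.
Proof. reflexivity. Qed.

Lemma PCT_fmode_phased omega nu alpha theta p t x :
  0 < sin (PI * nu) -> 0 < sin theta ->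
  PCT_fmode omega nu alpha theta p t x
  = Cmul (Copp Ci)
      (mode_phased omega nu alpha theta (theta / 2 - PI * nu) (PI * nu - theta / 2) p t x).
Proof.
  intros Hnu Htheta.
  unfold PCT_fmode, Pop, Cop, T_fmode, f_gen, mode_phased, bessel_comb. cbv beta.
  rewrite dot3_neg, Cexp_neg_conj, Cexp_3PI2.
  fold (mode_prefactor omega nu theta). rewrite (mode_prefactor_imag _ _ _ Hnu Htheta).
  rewrite conj_time_reversed_shape, !Cconj_Cexp_mul.
  replace (- (- theta / 2 + PI * nu)) with (theta / 2 - PI * nu) by field.
  replace (- (theta / 2 + PI * - nu)) with (PI * nu - theta / 2) by field.
  reflexivity.
Qed.

Lemma PCT_fmode_at_pi_nu omega nu alpha p t x : 0 < sin (PI * nu) ->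
  PCT_fmode omega nu alpha (PI * nu) p t x = Cmul (Copp Ci) (fmode omega nu alpha (PI * nu) p t x).
Proof.
  intros Hnu.
  rewrite PCT_fmode_phased, fmode_phased by exact Hnu.
  replace (PI * nu / 2 - PI * nu) with (- (PI * nu) / 2) by field.
  replace (PI * nu - PI * nu / 2) with (PI * nu / 2) by field.
  reflexivity.
Qed.

Lemma mode_phased_origin omega nu alpha theta s :
  0 < omega -> 0 < sin (PI * nu) -> 0 < sin theta ->
  exists q, 0 < q /\ forall phi1 phi2,
    mode_phased omega nu alpha theta phi1 phi2 (1, 0, 0) (- s) zero3
    = Cmul (0, q) (bessel_comb nu alpha phi1 phi2 s).
Proof.
  intros Homega Hnu Htheta.
  set (k := sqrt (PI / omega) / (2 * sqrt (sin (PI * nu)) * sqrt (sin theta))).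
  set (A := Rpower (- omega * - s) (3 / 2)). set (g := / Rpower (2 * PI) (3 / 2)).
  exists (k * (A * g)). split.
  - assert (0 < k).
    { unfold k. apply Rdiv_lt_0_compat.
      - apply sqrt_lt_R0, Rdiv_lt_0_compat; [apply PI_RGT_0 | lra].
      - pose proof (sqrt_lt_R0 _ Hnu). pose proof (sqrt_lt_R0 _ Htheta). nra. }
    assert (0 < A) by (unfold A, Rpower; apply exp_pos).
    assert (0 < g) by (unfold g, Rpower; apply Rinv_0_lt_compat, exp_pos).
    apply Rmult_lt_0_compat; [| apply Rmult_lt_0_compat]; lra.
  - intros phi1 phi2. unfold mode_phased.
    rewrite mode_prefactor_imag, norm3_e1 by assumption. fold k A g.
    replace (- (1) * - s) with s by ring.
    replace (dot3 zero3 (1, 0, 0)) with 0 by (unfold dot3, zero3; ring).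
    rewrite Cexp_0. destruct (bessel_comb nu alpha phi1 phi2 s).
    unfold Cmul, RtoC; simpl. f_equal; ring.
Qed.

Lemma sin_eq_0_near_0 y : - PI < y < PI -> sin y = 0 -> y = 0.
Proof.
  intros Hy Hsin.
  destruct (Rtotal_order y 0) as [Hneg | [Hzero | Hpos]]; [| exact Hzero |].
  - pose proof (sin_gt_0 (- y) ltac:(lra) ltac:(lra)). rewrite sin_neg in *. lra.
  - pose proof (sin_gt_0 y Hpos ltac:(lra)). lra.
Qed.

(* Testing the proportionality at x = 0, p = (1,0,0) for all t < 0 and using
   the independence of J_nu and J_-nu, both Bessel coefficients must be
   proportional with the same constant c; comparing the two expressions of c
   forces e^(i(theta - pi nu)) to be real, i.e. sin(theta - pi nu) = 0. *)
Lemma PCT_proportional_phase omega nu alpha theta (c : Cplx) :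
  0 < omega -> 0 < nu < 1 -> 0 < theta < PI ->
  (forall t, t < 0 ->
     PCT_fmode omega nu alpha theta (1, 0, 0) t zero3
     = Cmul c (fmode omega nu alpha theta (1, 0, 0) t zero3)) ->
  theta = PI * nu.
Proof.
  intros Homega Hnu Htheta Hprop.
  assert (HsinNu : 0 < sin (PI * nu)) by (pose proof PI_RGT_0; apply sin_gt_0; nra).
  assert (HsinTheta : 0 < sin theta) by (apply sin_gt_0; lra).
  assert (Hcomb : forall s, 0 < s ->
            Cmul (Copp Ci) (bessel_comb nu alpha (theta / 2 - PI * nu) (PI * nu - theta / 2) s)
            = Cmul c (bessel_comb nu alpha (- theta / 2) (theta / 2) s)).
  { intros s Hs. specialize (Hprop (- s) ltac:(lra)).
    rewrite PCT_fmode_phased, fmode_phased in Hprop by assumption.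
    destruct (mode_phased_origin omega nu alpha theta s Homega HsinNu HsinTheta) as [q [Hq Hmode]].
    rewrite !Hmode in Hprop.
    exact (Cmul_imag_cancel _ _ _ _ q ltac:(lra) Hprop). }
  destruct (besselJ_comb_coeffs nu _ _ _ _ _ _ Hnu Hcomb) as [H1 H2].
  apply Cexp_proportional in H1, H2. rewrite H1 in H2.
  unfold Cmul, Cexp, Copp, Ci in H2; simpl in H2. injection H2 as Hre _.
  rewrite exp_0 in Hre.
  assert (Hsin : sin (theta - PI * nu) = 0).
  { replace (PI * nu - theta / 2 - theta / 2) with (- (theta - PI * nu)) in Hre by field.
    replace (theta / 2 - PI * nu - - theta / 2) with (theta - PI * nu) in Hre by field.
    rewrite sin_neg in Hre. lra. }
  pose proof PI_RGT_0.
  apply sin_eq_0_near_0 in Hsin; [lra | nra].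
Qed.

Theorem corollary6 (omega m lambda : R)
  (Homega : 0 < omega) (Hlambda : 0 < lambda) (Hmu : m / omega < lambda)
  (Hnu : 0 < nu_of omega m lambda < 1) :
  (forall alpha theta : R, 0 < theta < PI ->
     (forall p : R3, p <> zero3 ->
        exists c : Cplx, forall (t : R) (x : R3), t < 0 ->
          PCT_fmode omega (nu_of omega m lambda) alpha theta p t x
          = Cmul c (fmode omega (nu_of omega m lambda) alpha theta p t x)) ->
     theta = PI * nu_of omega m lambda)
  /\
  (forall (alpha : R) (p : R3), p <> zero3 ->
     forall (t : R) (x : R3), t < 0 ->
       PCT_fmode omega (nu_of omega m lambda) alpha (PI * nu_of omega m lambda) p t x
       = Cmul (Copp Ci)
           (fmode omega (nu_of omega m lambda) alpha (PI * nu_of omega m lambda) p t x)).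
Proof.
  set (nu := nu_of omega m lambda) in *.
  split.
  - intros alpha theta Htheta Hprop.
    destruct (Hprop (1, 0, 0)) as [c Hc]; [intro E; injection E; lra |].
    apply (PCT_proportional_phase omega nu alpha theta c Homega Hnu Htheta).
    intros t Ht. exact (Hc t zero3 Ht).
  - intros alpha p _ t x _. apply PCT_fmode_at_pi_nu.
    pose proof PI_RGT_0. apply sin_gt_0; nra.
Qed.
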